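(* Let $\mathcal{H}$ and $\mathcal{H}_{\rm mem}$ be finite-dimensional Hilbert spaces and $U$ a unitary on $\mathcal{H}\otimes\mathcal{H}_{\rm mem}$ generating a memory channel of finite memory depth $\Delta_U=n$. Let $\Xi_1=R_1\otimes\cdots\otimes R_n$ and $\Xi_2=R'_1\otimes\cdots\otimes R'_n$ be product states of $n$ inputs (reset sequences), let $\omega_{12}$ be an arbitrary (possibly correlated) state of two copies of $\mathcal{H}$, and let $\xi$ be any memory state. Feed the memory channel $2n+2$ inputs: inputs $1,\dots,n$ in state $\Xi_1$, inputs $n+2,\dots,2n+1$ in state $\Xi_2$, and inputs $n+1$ and $2n+2$ jointly in state $\omega_{12}$. Then the joint output state of inputs $n+1$ and $2n+2$, $$\mathrm{tr}_{\text{all other outputs},\,\rm mem}\big[U_{2n+2}\cdots U_1(\Xi_1\otimes\omega_{12}\otimes\Xi_2\otimes\xi)U_1^\dagger\cdots U_{2n+2}^\dagger\big]$$ (with the factors placed at the appropriate input positions), equals $(\mathcal{E}_{\Xi_1}\otimes\mathcal{E}_{\Xi_2})[\omega_{12}]$, independently of $\xi$, where for a product reset sequence $\Xi$ of $n$ inputs $\mathcal{E}_\Xi[\omega]=\mathrm{tr}_{\rm res,mem}[U_{n+1}\cdots U_1(\Xi\otimes\omega\otimes\xi')U_1^\dagger\cdots U_{n+1}^\dagger]$ for any memory state $\xi'$ (this does not depend on $\xi'$).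
   Context: A memory channel generated by a fixed unitary $U$ on $\mathcal{H}\otimes\mathcal{H}_{\rm mem}$: for $m$ uses, inputs on $\mathcal{H}^{\otimes m}$ and memory initially in state $\xi$ are transformed by $U_m\cdots U_1$, where $U_j$ denotes $U$ acting on the $j$th input and the memory (identity elsewhere), and the memory is then traced out. For uncorrelated inputs $\varrho_1,\varrho_2,\dots$ and initial memory $\xi_1$, the $j$th input undergoes $\mathcal{E}_j[\varrho]=\mathrm{tr}_{\rm mem}[U(\varrho\otimes\xi_j)U^\dagger]$ with $\xi_{j+1}=\mathrm{tr}_{\rm sys}[U(\varrho_j\otimes\xi_j)U^\dagger]$. The memory depth $\Delta_U$ is the smallest integer $\Delta\ge0$ such that for every $m>\Delta$ the channel $\mathcal{E}_m$ is independent of $\xi_1$ and of $\varrho_j$ for $j<m-\Delta$ (for all choices); equivalently, for every memory state and every product sequence of $\Delta$ inputs, the channel on the next input does not depend on the memory state preceding those $\Delta$ inputs. *)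

From mathcomp Require Import all_boot all_order all_algebra.
From mathcomp Require Import algC.
Set Implicit Arguments. Unset Strict Implicit. Unset Printing Implicit Defensive.
Import Order.TTheory GRing.Theory Num.Theory.
Local Open Scope ring_scope.

(* An operator on the Hilbert space C^T (T a finite type indexing an o.n. basis). *)
Definition Op (T : finType) := T -> T -> algC.

Definition idop (T : finType) : Op T := fun i j => (i == j)%:R.
Definition mulop (T : finType) (A B : Op T) : Op T :=
  fun i j => \sum_(l : T) A i l * B l j.
Definition adjop (T : finType) (A : Op T) : Op T := fun i j => Num.conj (A j i).
Definition traceop (T : finType) (A : Op T) : algC := \sum_(i : T) A i i.

(* positive semidefinite: <v, A v> >= 0 for all v (in algC, 0 <= z forces z real) *)
Definition psd (T : finType) (A : Op T) : Prop :=
  forall v : T -> algC, 0 <= \sum_(i : T) \sum_(j : T) Num.conj (v i) * A i j * v j.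
Definition density (T : finType) (A : Op T) : Prop := psd A /\ traceop A = 1.
Definition unitary (T : finType) (U : Op T) : Prop :=
  mulop (adjop U) U = @idop T /\ mulop U (adjop U) = @idop T.

Definition tensop (S T : finType) (A : Op S) (B : Op T) : Op (S * T)%type :=
  fun X Y => A X.1 Y.1 * B X.2 Y.2.
Definition conjop (T : finType) (W rho : Op T) : Op T :=
  mulop W (mulop rho (adjop W)).

Definition chan (d k : nat) (U : Op ('I_d * 'I_k)%type) (xi : Op 'I_k) (rho : Op 'I_d)
  : Op 'I_d :=
  fun i j => \sum_(a : 'I_k) conjop U (tensop rho xi) (i, a) (j, a).
Definition memstep (d k : nat) (U : Op ('I_d * 'I_k)%type) (xi : Op 'I_k) (rho : Op 'I_d)
  : Op 'I_k :=
  fun a b => \sum_(i : 'I_d) conjop U (tensop rho xi) (i, a) (i, b).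
Definition mem_after (d k : nat) (U : Op ('I_d * 'I_k)%type) (xi : Op 'I_k)
  (rs : seq (Op 'I_d)) : Op 'I_k :=
  foldl (memstep U) xi rs.

Definition depth_le (d k : nat) (U : Op ('I_d * 'I_k)%type) (D : nat) : Prop :=
  forall (R : 'I_D -> Op 'I_d) (xi xi' : Op 'I_k) (rho : Op 'I_d),
    (forall i, density (R i)) -> density xi -> density xi' -> density rho ->
    chan U (mem_after U xi [seq R i | i <- enum 'I_D]) rho =
    chan U (mem_after U xi' [seq R i | i <- enum 'I_D]) rho.

Definition memory_depth (d k : nat) (U : Op ('I_d * 'I_k)%type) (n : nat) : Prop :=
  depth_le U n /\ forall D, (D < n)%N -> ~ depth_le U D.

(* basis of H^{(x) m} (x) H_mem *)
Definition Full (d k m : nat) : finType := ({ffun 'I_m -> 'I_d} * 'I_k)%type.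

(* U_j : U acting on the j-th input and the memory, identity elsewhere *)
Definition Ustep (d k m : nat) (U : Op ('I_d * 'I_k)%type) (j : 'I_m) : Op (Full d k m) :=
  fun X Y => U (X.1 j, X.2) (Y.1 j, Y.2) *
             ([forall l : 'I_m, (l != j) ==> (X.1 l == Y.1 l)])%:R.

Definition Wseq (d k m : nat) (U : Op ('I_d * 'I_k)%type) : Op (Full d k m) :=
  foldl (fun acc j => mulop (Ustep U j) acc) (@idop (Full d k m)) (enum 'I_m).

Definition evolve (d k m : nat) (U : Op ('I_d * 'I_k)%type) (rho : Op (Full d k m))
  : Op (Full d k m) := conjop (Wseq U) rho.

Definition upd (d m : nat) (x : {ffun 'I_m -> 'I_d}) (p : 'I_m) (v : 'I_d)
  : {ffun 'I_m -> 'I_d} := [ffun l => if l == p then v else x l].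

(* reduced state of output p (tracing out all other outputs and the memory) *)
Definition out1 (d k m : nat) (p : 'I_m) (rho : Op (Full d k m)) : Op 'I_d :=
  fun i j => \sum_(x : {ffun 'I_m -> 'I_d} | x p == i)
               \sum_(a : 'I_k) rho (x, a) (upd x p j, a).

(* joint reduced state of outputs p and q (p <> q) *)
Definition out2 (d k m : nat) (p q : 'I_m) (rho : Op (Full d k m))
  : Op ('I_d * 'I_d)%type :=
  fun i j => \sum_(x : {ffun 'I_m -> 'I_d} | (x p == i.1) && (x q == i.2))
               \sum_(a : 'I_k) rho (x, a) (upd (upd x p j.1) q j.2, a).

Definition reset_input (d k n : nat) (R : 'I_n -> Op 'I_d) (om : Op 'I_d)
  (xi : Op 'I_k) : Op (Full d k n.+1) :=
  fun X Y => (\prod_(i < n) R i (X.1 (inord i)) (Y.1 (inord i)))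
             * om (X.1 ord_max) (Y.1 ord_max) * xi X.2 Y.2.

(* E_Xi[omega] = tr_{res,mem}[U_{n+1}...U_1 (Xi (x) omega (x) xi') ...^dag]
   (defined for every operator omega; it is linear in omega) *)
Definition EXi (d k n : nat) (U : Op ('I_d * 'I_k)%type) (R : 'I_n -> Op 'I_d)
  (xi : Op 'I_k) (om : Op 'I_d) : Op 'I_d :=
  out1 ord_max (evolve U (reset_input R om xi)).

Definition eunit (d : nat) (i j : 'I_d) : Op 'I_d :=
  fun a b => ((a == i) && (b == j))%:R.

(* (E1 (x) E2)[omega] for linear maps E1, E2 given on matrix units *)
Definition tensmap (d : nat) (E1 E2 : Op 'I_d -> Op 'I_d) (om : Op ('I_d * 'I_d)%type)
  : Op ('I_d * 'I_d)%type :=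
  fun P Q => \sum_(i : 'I_d) \sum_(j : 'I_d) \sum_(i' : 'I_d) \sum_(j' : 'I_d)
      om (i, j) (i', j') * E1 (eunit i i') P.1 Q.1 * E2 (eunit j j') P.2 Q.2.

(* positions (0-based) in 'I_(2n+2): inputs 1..n -> 0..n-1, input n+1 -> n,
   inputs n+2..2n+1 -> n+1..2n, input 2n+2 -> 2n+1 *)
Definition pos1 (n : nat) (i : 'I_n) : 'I_(n + n).+2 := inord i.
Definition posA (n : nat) : 'I_(n + n).+2 := inord n.
Definition pos2 (n : nat) (i : 'I_n) : 'I_(n + n).+2 := inord (n.+1 + i).
Definition posB (n : nat) : 'I_(n + n).+2 := inord (n + n).+1.

Definition two_input (d k n : nat) (R R' : 'I_n -> Op 'I_d)
  (om : Op ('I_d * 'I_d)%type) (xi : Op 'I_k) : Op (Full d k (n + n).+2) :=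
  fun X Y =>
    (\prod_(i < n) R i (X.1 (pos1 i)) (Y.1 (pos1 i)))
    * om (X.1 (posA n), X.1 (posB n)) (Y.1 (posA n), Y.1 (posB n))
    * (\prod_(i < n) R' i (X.1 (pos2 i)) (Y.1 (pos2 i)))
    * xi X.2 Y.2.

(* Tracing out
   an output commutes with every later U_j, so each reset input may be traced out
   right after its use; as it enters in product form, this only applies one memory
   update to the memory, blockwise in the remaining system indices. After the first
   reset sequence the memory is thus mem_after xi Xi1, input n+1 then interacts with
   it, and after the second reset sequence the last use sees the memory
   mem_after N Xi2 for an off-diagonal memory block N. Memory depth n says the
   channel after a reset sequence forgets the preceding memory state; by linearity,
   and since density matrices span all operators, this holds for every operator N up
   to the factor tr N. That factor is the contribution of use n+1, which decouples
   the two uses into (E_Xi1 (x) E_Xi2)[omega]. *)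

From mathcomp Require Import all_boot all_order all_algebra.
From mathcomp Require Import algC.
From mathcomp Require Import ring zify.
From Stdlib Require Import FunctionalExtensionality.
Import Order.TTheory GRing.Theory Num.Theory.
Local Open Scope ring_scope.

Lemma funext2 (A B C : Type) (f g : A -> B -> C) :
  (forall x y, f x y = g x y) -> f = g.
Proof.
by move=> fg; apply: functional_extensionality => x;
  apply: functional_extensionality => y.
Qed.

Section Sums.
Context {T : finType}.
Implicit Types F : T -> algC.

Lemma sum_delta F w : \sum_z (z == w)%:R * F z = F w.
Proof.
rewrite (bigD1 w) //= eqxx mul1r big1 ?addr0 // => z /negbTE ->.
by rewrite mul0r.
Qed.

Lemma sum_supp1 a F : (forall i, i != a -> F i = 0) -> \sum_i F i = F a.
Proof. by move=> F0; rewrite (bigD1 a) //= big1 ?addr0. Qed.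

Lemma sum_supp2 a b F : a != b ->
  (forall i, i != a -> i != b -> F i = 0) -> \sum_i F i = F a + F b.
Proof.
move=> ab F0; rewrite (bigD1 a) //= (bigD1 b) /=; last by rewrite eq_sym.
by rewrite big1 ?addr0 // => i /andP[ia ib]; apply: F0.
Qed.
End Sums.

Lemma sum_pair (I J : finType) (F : (I * J)%type -> algC) :
  \sum_l F l = \sum_i \sum_j F (i, j).
Proof. by rewrite pair_bigA; apply: eq_bigr => -[]. Qed.

Section Operators.
Context {T : finType}.
Implicit Types A B C W X : Op T.

Lemma mulopA A B C : mulop A (mulop B C) = mulop (mulop A B) C.
Proof.
apply: funext2 => i j; rewrite /mulop.
under eq_bigr do rewrite big_distrr /=.
rewrite exchange_big /=; apply: eq_bigr => l _.
by rewrite big_distrl /=; apply: eq_bigr => l' _; rewrite mulrA.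
Qed.

Lemma adjop_mul A B : adjop (mulop A B) = mulop (adjop B) (adjop A).
Proof.
apply: funext2 => i j; rewrite /adjop /mulop rmorph_sum.
by apply: eq_bigr => l _; rewrite rmorphM mulrC.
Qed.

Lemma conjop_mul B A X : conjop (mulop B A) X = conjop B (conjop A X).
Proof. by rewrite /conjop adjop_mul !mulopA. Qed.

Lemma mul1op A : mulop (@idop T) A = A.
Proof.
apply: funext2 => i j; rewrite /mulop (sum_supp1 i) /idop ?eqxx ?mul1r //.
by move=> l; rewrite eq_sym => /negbTE ->; rewrite mul0r.
Qed.

Lemma mulop1 A : mulop A (@idop T) = A.
Proof.
apply: funext2 => i j; rewrite /mulop (sum_supp1 j) /idop ?eqxx ?mulr1 //.
by move=> l /negbTE ->; rewrite mulr0.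
Qed.

Lemma conjop1 X : conjop (@idop T) X = X.
Proof.
have adj1 : adjop (@idop T) = @idop T.
  by apply: funext2 => i j; rewrite /adjop /idop conjC_nat eq_sym.
by rewrite /conjop adj1 mulop1 mul1op.
Qed.
End Operators.

Lemma conjop_pair (S T : finType) (W X : Op (S * T)%type) i a j b :
  conjop W X (i, a) (j, b) =
  \sum_t \sum_c \sum_t' \sum_c'
    W (i, a) (t, c) * X (t, c) (t', c') * (W (j, b) (t', c'))^*.
Proof.
rewrite /conjop /mulop /adjop sum_pair; apply: eq_bigr => t _.
apply: eq_bigr => c _; rewrite big_distrr sum_pair /=.
by apply: eq_bigr => t' _; apply: eq_bigr => c' _; rewrite mulrA.
Qed.

Definition block {S T : finType} (K : Op (S * T)%type) (x y : S) : Op T :=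
  fun c c' => K (x, c) (y, c').

Definition linop {S T : finType} (h : Op S -> Op T) :=
  forall (z : algC) (A B : Op S),
    h (fun i j => z * A i j + B i j) = fun i j => z * h A i j + h B i j.

Section Linear.
Context {S T V : finType}.

Lemma linop0 (h : Op S -> Op T) : linop h -> h (fun _ _ => 0) = fun _ _ => 0.
Proof.
move=> hlin; have := hlin 1 (fun _ _ => 0) (fun _ _ => 0).
have -> : (fun (i j : S) => 1 * (0 : algC) + 0) = fun _ _ => 0.
  by apply: funext2 => *; rewrite mul1r addr0.
move=> E; apply: funext2 => i j; have := congr1 (fun f => f i j) E => /=.
by rewrite mul1r -{1}[h _ i j]addr0 => /addrI <-.
Qed.

Lemma linopZ (h : Op S -> Op T) z A : linop h ->
  h (fun i j => z * A i j) = fun i j => z * h A i j.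
Proof.
move=> hlin; have := hlin z A (fun _ _ => 0); rewrite linop0 //.
have -> : (fun i j => z * A i j + 0) = fun i j => z * A i j.
  by apply: funext2 => *; rewrite addr0.
by move=> ->; apply: funext2 => *; rewrite addr0.
Qed.

Lemma linop_sum (h : Op S -> Op T) (I : Type) (r : seq I) (z : I -> algC) F :
  linop h -> h (fun i j => \sum_(l <- r) z l * F l i j) =
  fun i j => \sum_(l <- r) z l * h (F l) i j.
Proof.
move=> hlin; elim: r => [|l r IH].
  have -> : (fun i j => \sum_(l <- [::]) z l * F l i j) = fun _ _ => 0.
    by apply: funext2 => *; rewrite big_nil.
  by rewrite linop0 //; apply: funext2 => *; rewrite big_nil.
have -> : (fun i j => \sum_(l0 <- l :: r) z l0 * F l0 i j) =
          fun i j => z l * F l i j + \sum_(l0 <- r) z l0 * F l0 i j.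
  by apply: funext2 => *; rewrite big_cons.
by rewrite hlin IH; apply: funext2 => *; rewrite big_cons.
Qed.

Lemma linop_comp {h1 : Op S -> Op T} {h2 : Op T -> Op V} :
  linop h1 -> linop h2 -> linop (fun A => h2 (h1 A)).
Proof. by move=> lin1 lin2 z A B /=; rewrite lin1 lin2. Qed.

Lemma linop_trace_scale (C : Op T) : linop (fun A : Op S => fun i j => traceop A * C i j).
Proof.
move=> z A B; apply: funext2 => i j; rewrite /traceop big_split /= -mulr_sumr.
by ring.
Qed.

Lemma linop_scale (c : algC) : linop (fun A : Op S => fun i j => c * A i j).
Proof. by move=> z A B; apply: funext2 => i j; ring. Qed.
End Linear.

Lemma linop_conjop {S : finType} (W : Op S) : linop (fun A => conjop W A).
Proof.
move=> z A B; apply: funext2 => i j; rewrite /conjop /mulop mulr_sumr -big_split.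
apply: eq_bigr => l _ /=; rewrite [z * _]mulrCA -mulrDr; congr (_ * _).
by rewrite mulr_sumr -big_split; apply: eq_bigr => l' _ /=; ring.
Qed.

Section LinearTensor.
Context {S T : finType}.

Lemma linop_tensopr (rho : Op S) : linop (fun xi : Op T => tensop rho xi).
Proof. by move=> z A B; apply: funext2 => X Y; rewrite /tensop; ring. Qed.

Lemma linop_tensopl (xi : Op T) : linop (fun rho : Op S => tensop rho xi).
Proof. by move=> z A B; apply: funext2 => X Y; rewrite /tensop; ring. Qed.

Lemma linop_ptrace1 :
  linop (fun G : Op (S * T)%type => fun a b : T => \sum_i G (i, a) (i, b)).
Proof. by move=> z A B; apply: funext2 => a b; rewrite big_split /= mulr_sumr. Qed.

Lemma linop_ptrace2 :
  linop (fun G : Op (S * T)%type => fun i j : S => \sum_a G (i, a) (j, a)).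
Proof. by move=> z A B; apply: funext2 => a b; rewrite big_split /= mulr_sumr. Qed.
End LinearTensor.

Section Densities.
Context {d : nat}.
Local Notation T := 'I_d.

Definition rank1 (w : T -> algC) : Op T := fun i j => w i * (w j)^*.

Lemma psd_rank1 w : psd (rank1 w).
Proof.
move=> v; set s := \sum_i (v i)^* * w i.
have -> : \sum_i \sum_j (v i)^* * rank1 w i j * v j = s * s^*.
  rewrite /s rmorph_sum mulr_suml; apply: eq_bigr => i _.
  rewrite mulr_sumr; apply: eq_bigr => j _.
  by rewrite rmorphM /= conjCK /rank1; ring.
exact: mul_conjC_ge0.
Qed.

Lemma psd_scale (r : algC) (A : Op T) : 0 <= r -> psd A -> psd (fun i j => r * A i j).
Proof.
move=> r0 psdA v.
have -> : \sum_i \sum_j (v i)^* * (r * A i j) * v j =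
          r * \sum_i \sum_j (v i)^* * A i j * v j.
  rewrite mulr_sumr; apply: eq_bigr => i _; rewrite mulr_sumr.
  by apply: eq_bigr => j _; ring.
exact: mulr_ge0.
Qed.

Lemma density_eunit (a : T) : density (eunit a a).
Proof.
split.
  have -> : eunit a a = rank1 (fun i => (i == a)%:R).
    by apply: funext2 => i j; rewrite /eunit /rank1 rmorph_nat -natrM mulnb.
  exact: psd_rank1.
by rewrite /traceop (sum_supp1 a) /eunit ?eqxx // => i /negbTE ->.
Qed.

Definition plus_state (a b : T) : Op T :=
  fun i j => 2^-1 * rank1 (fun l => (l == a)%:R + (l == b)%:R) i j.
Definition plusi_state (a b : T) : Op T :=
  fun i j => 2^-1 * rank1 (fun l => (l == a)%:R + 'i * (l == b)%:R) i j.

Lemma half_add_half : 2^-1 + 2^-1 = 1 :> algC.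
Proof. by field; rewrite ?pnatr_eq0. Qed.

Lemma density_plus_state a b : a != b -> density (plus_state a b).
Proof.
move=> ab; have ba : b != a by rewrite eq_sym.
split; first by apply: psd_scale; [rewrite invr_ge0 ler0n | exact: psd_rank1].
rewrite /traceop (sum_supp2 a b _ ab).
  rewrite /plus_state /rank1 !eqxx (negbTE ab) (negbTE ba) /= !rmorphD !rmorph_nat.
  by rewrite !addr0 !add0r !mulr1 half_add_half.
by move=> i /negbTE ia /negbTE ib; rewrite /plus_state /rank1 ia ib addr0 mul0r mulr0.
Qed.

Lemma density_plusi_state a b : a != b -> density (plusi_state a b).
Proof.
move=> ab; have ba : b != a by rewrite eq_sym.
split; first by apply: psd_scale; [rewrite invr_ge0 ler0n | exact: psd_rank1].
rewrite /traceop (sum_supp2 a b _ ab).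
  rewrite /plusi_state /rank1 !eqxx (negbTE ab) (negbTE ba) /= !rmorphD !rmorphM.
  rewrite !rmorph_nat /= conjCi !mulr0 !addr0 !add0r !mulr1 mulrN -expr2 sqrCi.
  by rewrite opprK mulr1 half_add_half.
move=> i /negbTE ia /negbTE ib.
by rewrite /plusi_state /rank1 ia ib mulr0 addr0 mul0r mulr0.
Qed.

Lemma eunit_density_combination a b : a != b ->
  eunit a b = fun i j => \sum_(l <- [:: (1, plus_state a b); ('i, plusi_state a b);
       (- (1 + 'i) / 2, eunit a a); (- (1 + 'i) / 2, eunit b b)]) l.1 * l.2 i j.
Proof.
move=> ab; have ba : b != a by rewrite eq_sym.
apply: funext2 => i j.
rewrite !big_cons big_nil /= /plus_state /plusi_state /rank1 /eunit.
rewrite !rmorphD !rmorphM !rmorph_nat /= conjCi.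
have iNi : 'i * - 'i = 1 :> algC by rewrite mulrN -expr2 sqrCi opprK.
have iNiC x : 'i * (x * - 'i) = x :> algC by rewrite mulrCA iNi mulr1.
have iiC x : 'i * (x * 'i) = - x :> algC by rewrite mulrCA -expr2 sqrCi mulrN1.
case: (eqVneq i a) => [->|ia]; case: (eqVneq j a) => [->|ja];
case: (eqVneq i b) => [ib|ib]; case: (eqVneq j b) => [jb|jb];
  rewrite ?eqxx ?(negbTE ab) ?(negbTE ba) ?(negbTE ia) ?(negbTE ja)
    ?(negbTE ib) ?(negbTE jb) //=.
all: rewrite ?mulr0 ?mul0r ?addr0 ?add0r ?mulr1 ?mul1r ?iNi ?iNiC ?iiC ?mulr1.
all: by field.
Qed.

Lemma op_eunit_expansion (A : Op T) :
  A = fun i j => \sum_(p : T * T) A p.1 p.2 * eunit p.1 p.2 i j.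
Proof.
apply: funext2 => i j; rewrite sum_pair (sum_supp1 i); last first.
  by move=> a ai; apply: big1 => b _; rewrite /eunit eq_sym (negbTE ai) mulr0.
rewrite (sum_supp1 j) /eunit ?eqxx ?mulr1 // => b bj.
by rewrite eqxx eq_sym (negbTE bj) mulr0.
Qed.

Lemma linop_eq_on_densities (S : finType) (h1 h2 : Op T -> Op S) :
  linop h1 -> linop h2 -> (forall D, density D -> h1 D = h2 D) ->
  forall A, h1 A = h2 A.
Proof.
move=> lin1 lin2 hD A.
have Ee a b : h1 (eunit a b) = h2 (eunit a b).
  case: (eqVneq a b) => [<-|ab]; first exact/hD/density_eunit.
  rewrite (eunit_density_combination _ _ ab) !linop_sum //; apply: funext2 => i j.
  rewrite !big_cons !big_nil /= (hD _ (density_plus_state _ _ ab)).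
  by rewrite (hD _ (density_plusi_state _ _ ab)) !hD //; apply: density_eunit.
rewrite (op_eunit_expansion A) !linop_sum //; apply: funext2 => i j.
by apply: eq_bigr => p _; rewrite Ee.
Qed.
End Densities.

Section Channel.
Context {d k : nat} (U : Op ('I_d * 'I_k)%type).

Lemma linop_memstep rho : linop (fun xi => memstep U xi rho).
Proof.
exact: (linop_comp (linop_comp (linop_tensopr rho) (linop_conjop U)) linop_ptrace1).
Qed.

Lemma linop_chan_mem rho : linop (fun xi => chan U xi rho).
Proof.
exact: (linop_comp (linop_comp (linop_tensopr rho) (linop_conjop U)) linop_ptrace2).
Qed.

Lemma linop_chan_in xi : linop (chan U xi).
Proof.
exact: (linop_comp (linop_comp (linop_tensopl xi) (linop_conjop U)) linop_ptrace2).
Qed.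

Lemma linop_mem_after rs : linop (fun xi => mem_after U xi rs).
Proof.
elim: rs => [|r rs IH] //=.
exact: linop_comp (linop_memstep r) IH.
Qed.

Lemma mem_afterZ z xi rs :
  mem_after U (fun c c' => z * xi c c') rs = fun c c' => z * mem_after U xi rs c c'.
Proof. exact: (linopZ _ z xi (linop_mem_after rs)). Qed.

Lemma chan_memZ z xi rho :
  chan U (fun c c' => z * xi c c') rho = fun i j => z * chan U xi rho i j.
Proof. exact: (linopZ _ z xi (linop_chan_mem rho)). Qed.

Lemma traceop_block_conjop xi rho i j :
  traceop (block (conjop U (tensop rho xi)) i j) = chan U xi rho i j.
Proof. by []. Qed.

Lemma chanE xi rho i j : chan U xi rho i j =
  \sum_a \sum_t \sum_c \sum_t' \sum_c'
    U (i, a) (t, c) * (rho t t' * xi c c') * (U (j, a) (t', c'))^*.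
Proof. by apply: eq_bigr => a _; rewrite conjop_pair. Qed.

Lemma chan_eunit_expansion xi rho i j :
  chan U xi rho i j = \sum_s \sum_s' rho s s' * chan U xi (eunit s s') i j.
Proof.
by rewrite {1}(op_eunit_expansion rho) (linop_sum _ _ _ _ _ (linop_chan_in xi)) sum_pair.
Qed.

Lemma sum_chan_eunit (G : 'I_d -> 'I_d -> Op 'I_k) i j :
  \sum_a \sum_t \sum_c \sum_t' \sum_c'
     U (i, a) (t, c) * G t t' c c' * (U (j, a) (t', c'))^* =
  \sum_t \sum_t' chan U (G t t') (eunit t t') i j.
Proof.
rewrite exchange_big; apply: eq_bigr => t _.
under eq_bigr => a _ do rewrite exchange_big.
rewrite exchange_big; apply: eq_bigr => t' _; rewrite chanE.
apply: eq_bigr => a _; rewrite (sum_supp1 t); last first.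
  move=> t0 t0t; apply: big1 => c _; apply: big1 => t1 _; apply: big1 => c' _.
  by rewrite /eunit (negbTE t0t) mul0r mulr0 mul0r.
apply: eq_bigr => c _; rewrite (sum_supp1 t'); last first.
  by move=> t1 t1t; apply: big1 => c' _; rewrite /eunit eqxx (negbTE t1t) mul0r mulr0 mul0r.
by apply: eq_bigr => c' _; rewrite /eunit !eqxx mul1r.
Qed.

(* Memory depth n is stated for density matrices only; both sides are linear in
   the memory state N and in the input rho, and density matrices span all operators. *)
Lemma chan_after_reset n (R : 'I_n -> Op 'I_d) xi0 :
  depth_le U n -> (forall i, density (R i)) -> density xi0 ->
  forall N rho, chan U (mem_after U N [seq R i | i <- enum 'I_n]) rho =
    fun i j => traceop N * chan U (mem_after U xi0 [seq R i | i <- enum 'I_n]) rho i j.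
Proof.
move=> depthU densR dens0; set rs := [seq R i | i <- enum 'I_n].
have on_density_inputs rho : density rho -> forall N,
    chan U (mem_after U N rs) rho =
    fun i j => traceop N * chan U (mem_after U xi0 rs) rho i j.
  move=> densrho; apply: linop_eq_on_densities.
  - exact: linop_comp (linop_mem_after rs) (linop_chan_mem rho).
  - exact: linop_trace_scale.
  move=> D [densD trD]; rewrite (depthU R D xi0 rho) //.
  by apply: funext2 => i j; rewrite trD mul1r.
move=> N; apply: linop_eq_on_densities => [||D densD].
- exact: linop_chan_in.
- exact: linop_comp (linop_chan_in _) (linop_scale _).
- exact: on_density_inputs.
Qed.
End Channel.

Section Update.
Context {d m : nat}.
Implicit Types x y z : {ffun 'I_m -> 'I_d}.

Lemma updE x p v l : upd x p v l = if l == p then v else x l.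
Proof. by rewrite ffunE. Qed.

Lemma upd_same x p v : upd x p v p = v.
Proof. by rewrite updE eqxx. Qed.

Lemma upd_other x p v l : l != p -> upd x p v l = x l.
Proof. by rewrite updE => /negbTE ->. Qed.

Lemma upd_upd x p v w : upd (upd x p v) p w = upd x p w.
Proof. by apply/ffunP => l; rewrite !updE; case: (l == p). Qed.

Lemma updC x p q v w : p != q -> upd (upd x p v) q w = upd (upd x q w) p v.
Proof.
move=> pq; apply/ffunP => l; rewrite !updE.
by case: (eqVneq l q) => [->|//]; rewrite eq_sym (negbTE pq).
Qed.

Lemma sum_agree_off p x (F : {ffun 'I_m -> 'I_d} -> algC) :
  \sum_(z : {ffun 'I_m -> 'I_d}) ([forall l, (l != p) ==> (x l == z l)])%:R * F z =
  \sum_t F (upd x p t).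
Proof.
have agreeE z : ([forall l, (l != p) ==> (x l == z l)])%:R =
                \sum_t (z == upd x p t)%:R :> algC.
  rewrite (sum_supp1 (z p)); last first.
    by move=> t tz; case: eqP => // zE; move: tz; rewrite zE upd_same eqxx.
  congr (nat_of_bool _)%:R; apply/forallP/eqP => [agree|->].
    apply/ffunP => l; rewrite updE; case: eqVneq => [->//|lp].
    by apply/esym/eqP; move/implyP: (agree l); apply.
  by move=> l; apply/implyP => lp; rewrite updE (negbTE lp).
under eq_bigr do rewrite agreeE big_distrl /=.
by rewrite exchange_big /=; apply: eq_bigr => t _; rewrite sum_delta.
Qed.
End Update.

Section MultipleUses.
Context {d k m : nat} (U : Op ('I_d * 'I_k)%type).
Local Notation F := (Full d k m).
Local Notation ff := {ffun 'I_m -> 'I_d}.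

Definition conjU (j : 'I_m) (G : Op F) : Op F := conjop (Ustep U j) G.

Lemma conjUE j G (x : ff) a (y : ff) b :
  conjU j G (x, a) (y, b) =
  \sum_t \sum_c \sum_t' \sum_c'
     U (x j, a) (t, c) * G (upd x j t, c) (upd y j t', c') * (U (y j, b) (t', c'))^*.
Proof.
rewrite /conjU /conjop /mulop /adjop sum_pair.
under eq_bigr => z _ do under eq_bigr => c _ do
  rewrite sum_pair /Ustep /= (mulrC (U _ _)) -mulrA.
under eq_bigr => z _ do rewrite -big_distrr /=.
rewrite (sum_agree_off j x (fun z => \sum_c U (x j, a) (z j, c) *
   \sum_z0 \sum_c0 G (z, c) (z0, c0) * (U (y j, b) (z0 j, c0) *
    ([forall l, (l != j) ==> (y l == z0 l)])%:R)^*)).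
apply: eq_bigr => t _; apply: eq_bigr => c _; rewrite upd_same.
transitivity (\sum_(z0 : ff) ([forall l, (l != j) ==> (y l == z0 l)])%:R *
   (\sum_c0 U (x j, a) (t, c) * G (upd x j t, c) (z0, c0) * (U (y j, b) (z0 j, c0))^*)).
  rewrite big_distrr /=; apply: eq_bigr => z0 _.
  rewrite !big_distrr /=; apply: eq_bigr => c0 _.
  by rewrite rmorphM rmorph_nat /=; ring.
rewrite (sum_agree_off j y (fun z0 => \sum_c0 U (x j, a) (t, c) *
  G (upd x j t, c) (z0, c0) * (U (y j, b) (z0 j, c0))^*)).
by apply: eq_bigr => t' _; apply: eq_bigr => c' _; rewrite upd_same.
Qed.

Lemma evolve_foldl_conjU X : evolve U X = foldl (fun G j => conjU j G) X (enum 'I_m).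
Proof.
rewrite /evolve /Wseq -[in RHS](conjop1 X).
by elim: (enum 'I_m) (@idop F) => //= j s IH A; rewrite IH conjop_mul.
Qed.

Definition ptrace_at (j : 'I_m) (G : Op F) : Op F :=
  fun X Y => \sum_t G (upd X.1 j t, X.2) (upd Y.1 j t, Y.2).

Lemma ptrace_atC l j G : ptrace_at l (ptrace_at j G) = ptrace_at j (ptrace_at l G).
Proof.
apply: funext2 => -[x a] [y b]; rewrite /ptrace_at /=.
case: (eqVneq l j) => [->//|lj].
rewrite exchange_big; apply: eq_bigr => t _; apply: eq_bigr => s _.
by rewrite !(updC _ _ _ _ _ lj).
Qed.

Lemma ptrace_at_conjU l j G : l != j -> ptrace_at l (conjU j G) = conjU j (ptrace_at l G).
Proof.
move=> lj; have jl : j != l by rewrite eq_sym.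
apply: funext2 => -[x a] [y b]; rewrite /ptrace_at /= conjUE.
under eq_bigr => s _ do rewrite conjUE.
rewrite exchange_big; apply: eq_bigr => t _.
rewrite exchange_big; apply: eq_bigr => c _.
rewrite exchange_big; apply: eq_bigr => t' _.
rewrite exchange_big; apply: eq_bigr => c' _.
rewrite mulr_sumr mulr_suml; apply: eq_bigr => s _ /=.
by rewrite !(upd_other _ _ _ _ jl) !(updC _ _ _ _ _ lj).
Qed.

Definition indep_at (j : 'I_m) (K : Op F) :=
  forall (x y : ff) a b s s', K (upd x j s, a) (upd y j s', b) = K (x, a) (y, b).
Definition indep_atf (j : 'I_m) (P : ff -> ff -> algC) :=
  forall (x y : ff) s s', P (upd x j s) (upd y j s') = P x y.

Definition memstep_blocks (rho : Op 'I_d) (K : Op F) : Op F :=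
  fun X Y => memstep U (block K X.1 Y.1) rho X.2 Y.2.
Definition memsteps_blocks (rs : seq (Op 'I_d)) (K : Op F) : Op F :=
  foldl (fun K rho => memstep_blocks rho K) K rs.

Lemma block_memsteps_blocks rs K x y :
  block (memsteps_blocks rs K) x y = mem_after U (block K x y) rs.
Proof. by elim: rs K => //= r rs IH K; rewrite IH. Qed.

Lemma memsteps_blocksE rs K x c y c' :
  memsteps_blocks rs K (x, c) (y, c') = mem_after U (block K x y) rs c c'.
Proof. by rewrite -block_memsteps_blocks. Qed.

Lemma indep_at_conjU l j K : l != j -> indep_at l K -> indep_at l (conjU j K).
Proof.
move=> lj indK x y a b s s'; have jl : j != l by rewrite eq_sym.
rewrite !conjUE !(upd_other _ _ _ _ jl).
apply: eq_bigr => t _; apply: eq_bigr => c _; apply: eq_bigr => t' _.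
by apply: eq_bigr => c' _; rewrite !(updC _ _ _ _ _ lj) indK.
Qed.

Lemma indep_at_memsteps_blocks l rs K : indep_at l K -> indep_at l (memsteps_blocks rs K).
Proof.
move=> indK x y a b s s'; rewrite !memsteps_blocksE.
by congr (mem_after U _ rs a b); apply: funext2 => c c'; apply: indK.
Qed.

Lemma ptrace_conjU_factor j rho (P : ff -> ff -> algC) K : indep_atf j P -> indep_at j K ->
  ptrace_at j (conjU j (fun X Y => rho (X.1 j) (Y.1 j) * P X.1 Y.1 * K X Y)) =
  fun X Y => P X.1 Y.1 * memstep_blocks rho K X Y.
Proof.
move=> indP indK; apply: funext2 => -[x a] [y b].
rewrite /ptrace_at /memstep_blocks /memstep /= mulr_sumr; apply: eq_bigr => s _.
rewrite conjUE conjop_pair mulr_sumr; apply: eq_bigr => t _.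
rewrite mulr_sumr; apply: eq_bigr => c _.
rewrite mulr_sumr; apply: eq_bigr => t' _.
rewrite mulr_sumr; apply: eq_bigr => c' _ /=.
by rewrite !upd_upd !upd_same indP /block indK /tensop; ring.
Qed.

Lemma conjU_factor j (P : ff -> ff -> algC) K : indep_atf j P ->
  conjU j (fun X Y => P X.1 Y.1 * K X Y) = fun X Y => P X.1 Y.1 * conjU j K X Y.
Proof.
move=> indP; apply: funext2 => -[x a] [y b].
rewrite !conjUE mulr_sumr; apply: eq_bigr => t _.
rewrite mulr_sumr; apply: eq_bigr => c _.
rewrite mulr_sumr; apply: eq_bigr => t' _.
by rewrite mulr_sumr; apply: eq_bigr => c' _ /=; rewrite indP; ring.
Qed.

Lemma sum_mem_conjU p K (x y : ff) :
  \sum_a conjU p K (x, a) (y, a) =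
  \sum_t \sum_t' chan U (block K (upd x p t) (upd y p t')) (eunit t t') (x p) (y p).
Proof.
under eq_bigr do rewrite conjUE.
exact: (sum_chan_eunit U (fun t t' => block K (upd x p t) (upd y p t'))).
Qed.
End MultipleUses.

Section PartialTraces.
Context {d k m : nat} (U : Op ('I_d * 'I_k)%type).
Local Notation F := (Full d k m).
Local Notation ff := {ffun 'I_m -> 'I_d}.

Definition ptraces (L : seq 'I_m) (G : Op F) := foldr ptrace_at G L.

Lemma ptraces_ptrace_at L j G : ptraces L (ptrace_at j G) = ptrace_at j (ptraces L G).
Proof. by elim: L => //= l L ->; rewrite ptrace_atC. Qed.

Lemma ptraces_conjU L j G : j \notin L -> ptraces L (conjU U j G) = conjU U j (ptraces L G).
Proof.
elim: L => //= l L IH; rewrite in_cons negb_or => /andP[jl jL].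
by rewrite IH // ptrace_at_conjU // eq_sym.
Qed.

Definition traced_step (keep : pred 'I_m) (G : Op F) (j : 'I_m) :=
  if keep j then conjU U j G else ptrace_at j (conjU U j G).

Lemma traced_step_keep (keep : pred 'I_m) G j :
  keep j -> traced_step keep G j = conjU U j G.
Proof. by rewrite /traced_step => ->. Qed.

Lemma ptraces_foldl_conjU (keep : pred 'I_m) s X : uniq s ->
  ptraces [seq l <- s | ~~ keep l] (foldl (fun G j => conjU U j G) X s) =
  foldl (traced_step keep) X s.
Proof.
elim/last_ind: s => [//|s j IH]; rewrite rcons_uniq => /andP[js us].
have jL : j \notin [seq l <- s | ~~ keep l] by rewrite mem_filter (negbTE js) andbF.
rewrite !foldl_rcons filter_rcons /traced_step; case: (keep j) => /=.
  by rewrite ptraces_conjU ?IH.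
by rewrite /ptraces foldr_rcons -/(ptraces _ _) ptraces_ptrace_at ptraces_conjU ?IH.
Qed.

Definition splice (L : seq 'I_m) (z y : ff) : ff :=
  [ffun l => if l \in L then z l else y l].

Lemma ptracesE L G (x : ff) a (y : ff) b : uniq L ->
  ptraces L G (x, a) (y, b) =
  \sum_(z : ff | [forall l, (l \notin L) ==> (z l == x l)]) G (z, a) (splice L z y, b).
Proof.
elim: L x y => [|j L IH] x y /=.
  move=> _; rewrite (big_pred1 x).
    by congr (G _ (_, b)); apply/ffunP => l; rewrite ffunE.
  move=> z /=; apply/forallP/eqP => [agree|->] //.
  by apply/ffunP => l; apply/eqP; exact: (agree l).
move=> /andP[jL uL]; rewrite /ptrace_at /=.
under eq_bigr => t _ do rewrite IH //.
rewrite (partition_big (fun z : ff => z j) xpredT) //=.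
apply: eq_bigr => t _; apply: eq_big => [z|z].
  apply/idP/idP.
    move/forallP => agree; apply/andP; split.
      apply/forallP => l; apply/implyP; rewrite in_cons negb_or => /andP[lj lL].
      by move/implyP: (agree l) => /(_ lL); rewrite upd_other.
    by move/implyP: (agree j) => /(_ jL); rewrite upd_same.
  case/andP => /forallP agree /eqP zj; apply/forallP => l; apply/implyP => lL.
  rewrite updE; case: (eqVneq l j) => [->|lj]; first by rewrite zj.
  by move/implyP: (agree l); rewrite in_cons negb_or lj lL; apply.
move=> /forallP agree.
have zj : z j = t by move/implyP: (agree j) => /(_ jL); rewrite upd_same => /eqP.
congr (G _ (_, b)); apply/ffunP => l.
rewrite /splice !ffunE in_cons; case: (eqVneq l j) => [->|lj] //=.
by rewrite (negbTE jL) zj.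
Qed.

Lemma out1E p G i j : out1 p G i j =
  \sum_a ptraces [seq l <- enum 'I_m | ~~ pred1 p l] G ([ffun => i], a) ([ffun => j], a).
Proof.
rewrite /out1 exchange_big /=; apply: eq_bigr => a _.
rewrite ptracesE; last exact: filter_uniq (enum_uniq _).
apply: eq_big => [x|x /eqP xp].
  apply/eqP/forallP => [<- l|agree].
    by apply/implyP; rewrite mem_filter mem_enum andbT negbK ffunE => /eqP ->.
  move/implyP: (agree p); rewrite mem_filter mem_enum andbT negbK eqxx ffunE.
  by move=> /(_ isT) /eqP.
congr (G _ (_, a)); apply/ffunP => l.
by rewrite updE !ffunE mem_filter mem_enum andbT /=; case: (l == p).
Qed.

Lemma out2E p q G I J : p != q -> out2 p q G I J =
  \sum_a ptraces [seq l <- enum 'I_m | ~~ pred2 p q l] G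
    ([ffun l => if l == p then I.1 else I.2], a)
    ([ffun l => if l == p then J.1 else J.2], a).
Proof.
move=> pq; have qp : q != p by rewrite eq_sym.
rewrite /out2 exchange_big /=; apply: eq_bigr => a _.
rewrite ptracesE; last exact: filter_uniq (enum_uniq _).
apply: eq_big => [x|x /andP[/eqP xp /eqP xq]].
  apply/andP/forallP => [[/eqP xp /eqP xq] l|agree].
    apply/implyP; rewrite mem_filter mem_enum andbT negbK ffunE.
    by case/orP => /eqP ->; rewrite ?eqxx ?(negbTE qp) ?xp ?xq.
  have pL : p \notin [seq l <- enum 'I_m | ~~ pred2 p q l].
    by rewrite mem_filter /= eqxx.
  have qL : q \notin [seq l <- enum 'I_m | ~~ pred2 p q l].
    by rewrite mem_filter /= eqxx orbT.
  move: (implyP (agree p) pL) (implyP (agree q) qL); rewrite !ffunE eqxx (negbTE qp).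
  by move=> /eqP -> /eqP ->.
congr (G _ (_, a)); apply/ffunP => l.
rewrite !updE !ffunE mem_filter mem_enum andbT /=.
case: (eqVneq l q) => [->|lq]; first by rewrite (negbTE qp) orbT.
by case: (eqVneq l p) => [->|lp].
Qed.

Lemma traced_evolution_product (keep : pred 'I_m) (I : eqType) (pos : I -> 'I_m)
  (rho : I -> Op 'I_d) (s : seq I) (P : ff -> ff -> algC) (K : Op F) :
  uniq (map pos s) -> (forall i, i \in s -> ~~ keep (pos i)) ->
  (forall i, i \in s -> indep_atf (pos i) P) -> (forall i, i \in s -> indep_at (pos i) K) ->
  foldl (traced_step keep)
    (fun X Y => (\prod_(i <- s) rho i (X.1 (pos i)) (Y.1 (pos i))) * P X.1 Y.1 * K X Y)
    (map pos s)
  = fun X Y => P X.1 Y.1 * memsteps_blocks U (map rho s) K X Y.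
Proof.
elim: s K => [|i s IH] K /=.
  by move=> *; apply: funext2 => X Y; rewrite big_nil mul1r.
move=> /andP[pis us] discard indP indK.
pose P' (x y : ff) := (\prod_(i0 <- s) rho i0 (x (pos i0)) (y (pos i0))) * P x y.
have indP' : indep_atf (pos i) P'.
  move=> x y t t'; rewrite /P' (indP i (mem_head _ _)); congr (_ * _).
  rewrite big_seq [RHS]big_seq; apply: eq_bigr => i0 i0s.
  have ne : pos i0 != pos i by apply: contraNneq pis => <-; exact: map_f.
  by rewrite !(upd_other _ _ _ _ ne).
have -> : traced_step keep
    (fun X Y => (\prod_(i0 <- i :: s) rho i0 (X.1 (pos i0)) (Y.1 (pos i0))) *
                P X.1 Y.1 * K X Y)
    (pos i) = fun X Y => P' X.1 Y.1 * memstep_blocks U (rho i) K X Y.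
  rewrite /traced_step (negbTE (discard i (mem_head _ _))).
  rewrite -(ptrace_conjU_factor U (pos i) (rho i) P' K indP' (indK i (mem_head _ _))).
  by congr (ptrace_at _ (conjU U _ _)); apply: funext2 => X Y; rewrite big_cons /P' !mulrA.
apply: IH => // [i0 i0s|i0 i0s|i0 i0s].
- by apply: discard; rewrite in_cons i0s orbT.
- by apply: indP; rewrite in_cons i0s orbT.
- apply: (indep_at_memsteps_blocks U _ [:: rho i]).
  by apply: indK; rewrite in_cons i0s orbT.
Qed.
End PartialTraces.

Lemma EXiE d k n (U : Op ('I_d * 'I_k)%type) (R : 'I_n -> Op 'I_d) xi om :
  EXi U R xi om = chan U (mem_after U xi [seq R i | i <- enum 'I_n]) om.
Proof.
set Xi := [seq R i | i <- enum 'I_n]; pose pos := widen_ord (leqnSn n).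
pose K0 : Op (Full d k n.+1) := fun X Y => om (X.1 ord_max) (Y.1 ord_max) * xi X.2 Y.2.
have pos_neq i : ord_max != pos i by rewrite -val_eqE /= neq_ltn ltn_ord orbT.
have inputE : reset_input R om xi = fun X Y =>
    (\prod_(i <- enum 'I_n) R i (X.1 (pos i)) (Y.1 (pos i))) *
    (fun _ _ => 1) X.1 Y.1 * K0 X Y.
  apply: funext2 => X Y; rewrite /reset_input /K0 mulr1 mulrA enumT.
  do 2!congr (_ * _); apply: eq_bigr => i _.
  by have -> : inord i = pos i by apply: val_inj; rewrite /= inordK // ltnS ltnW.
have uniq_pos : uniq (map pos (enum 'I_n)).
  by rewrite map_inj_uniq ?enum_uniq // => i1 i2 /(congr1 val) /= /val_inj.
have discard i : i \in enum 'I_n -> ~~ pred1 ord_max (pos i).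
  by rewrite /= eq_sym pos_neq.
have indK0 i : i \in enum 'I_n -> indep_at (pos i) K0.
  by move=> _ x y a b s s'; rewrite /K0 /= !upd_other.
apply: funext2 => i j.
rewrite /EXi out1E evolve_foldl_conjU ptraces_foldl_conjU ?enum_uniq //.
rewrite enum_ordSr foldl_rcons inputE.
rewrite (traced_evolution_product U _ _ pos R _ (fun _ _ => 1) K0) //.
rewrite traced_step_keep /=; last exact: eqxx.
have -> : (fun X Y => 1 * memsteps_blocks U Xi K0 X Y) = memsteps_blocks U Xi K0.
  by apply: funext2 => X Y; rewrite mul1r.
rewrite sum_mem_conjU chan_eunit_expansion !ffunE.
apply: eq_bigr => t _; apply: eq_bigr => t' _.
rewrite block_memsteps_blocks.
have -> : block K0 (upd [ffun => i] ord_max t) (upd [ffun => j] ord_max t') =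
          fun c c' => om t t' * xi c c'.
  by apply: funext2 => c c'; rewrite /block /K0 /= !upd_same.
by rewrite mem_afterZ chan_memZ.
Qed.

Section Positions.
Context {n : nat}.

Lemma val_posA : val (posA n) = n.
Proof. by rewrite /= inordK //; lia. Qed.
Lemma val_posB : val (posB n) = (n + n).+1.
Proof. by rewrite /= inordK //; lia. Qed.
Lemma val_pos1 (i : 'I_n) : val (pos1 i) = i.
Proof. by rewrite /= inordK //; have := ltn_ord i; lia. Qed.
Lemma val_pos2 (i : 'I_n) : val (pos2 i) = (n.+1 + i)%N.
Proof. by rewrite /= inordK //; have := ltn_ord i; lia. Qed.

Lemma posA_neq_posB : posA n != posB n.
Proof. by rewrite -val_eqE val_posA val_posB; apply/eqP; lia. Qed.
Lemma pos1_neq_posA (i : 'I_n) : pos1 i != posA n.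
Proof. by rewrite -val_eqE val_posA val_pos1; apply/eqP; have := ltn_ord i; lia. Qed.
Lemma pos1_neq_posB (i : 'I_n) : pos1 i != posB n.
Proof. by rewrite -val_eqE val_posB val_pos1; apply/eqP; have := ltn_ord i; lia. Qed.
Lemma pos2_neq_posA (i : 'I_n) : pos2 i != posA n.
Proof. by rewrite -val_eqE val_posA val_pos2; apply/eqP; lia. Qed.
Lemma pos2_neq_posB (i : 'I_n) : pos2 i != posB n.
Proof. by rewrite -val_eqE val_posB val_pos2; apply/eqP; have := ltn_ord i; lia. Qed.
Lemma pos2_neq_pos1 (i j : 'I_n) : pos2 i != pos1 j.
Proof. by rewrite -val_eqE val_pos1 val_pos2; apply/eqP; have := ltn_ord j; lia. Qed.

Lemma enum_two_input : enum 'I_(n + n).+2 =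
  map (@pos1 n) (enum 'I_n) ++ posA n :: (map (@pos2 n) (enum 'I_n) ++ [:: posB n]).
Proof.
apply: (inj_map val_inj).
rewrite val_enum_ord map_cat [map _ (_ :: _)]/= map_cat [map _ [:: _]]/= -!map_comp.
rewrite (eq_map val_pos1) (@eq_map _ _ (val \o @pos2 n) (addn n.+1 \o val) val_pos2).
rewrite -!enumT map_comp !val_enum_ord val_posA val_posB.
rewrite -iotaDl addn0.
have -> : (n + n).+2 = (n + (1 + (n + 1)))%N by lia.
by rewrite iotaD iotaD /= iotaD /= add0n addn1 addSn.
Qed.

Lemma uniq_pos1 : uniq (map (@pos1 n) (enum 'I_n)).
Proof.
rewrite map_inj_uniq ?enum_uniq // => i j /(congr1 val).
by rewrite !val_pos1 => /val_inj.
Qed.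

Lemma uniq_pos2 : uniq (map (@pos2 n) (enum 'I_n)).
Proof.
rewrite map_inj_uniq ?enum_uniq // => i j /(congr1 val).
by rewrite !val_pos2 => /eqP; rewrite eqn_add2l => /eqP /val_inj.
Qed.
End Positions.

Section TwoInputs.
Context {d k n : nat} (U : Op ('I_d * 'I_k)%type).
Variables (R R' : 'I_n -> Op 'I_d) (om : Op ('I_d * 'I_d)%type) (xi : Op 'I_k).
Local Notation m := (n + n).+2.
Local Notation ff := {ffun 'I_m -> 'I_d}.
Local Notation Xi1 := [seq R i | i <- enum 'I_n].
Local Notation Xi2 := [seq R' i | i <- enum 'I_n].

Definition correlated_input : Op (Full d k m) := fun X Y =>
  om (X.1 (posA n), X.1 (posB n)) (Y.1 (posA n), Y.1 (posB n)) * xi X.2 Y.2.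

Definition om_block (t t' : 'I_d) : Op 'I_d := fun s s' => om (s, t) (s', t').

Lemma traced_two_input :
  foldl (traced_step U (pred2 (posA n) (posB n))) (two_input R R' om xi) (enum 'I_m) =
  conjU U (posB n)
    (memsteps_blocks U Xi2 (conjU U (posA n) (memsteps_blocks U Xi1 correlated_input))).
Proof.
pose P2 (x y : ff) := \prod_(i <- enum 'I_n) R' i (x (pos2 i)) (y (pos2 i)).
have inputE : two_input R R' om xi = fun X Y =>
    (\prod_(i <- enum 'I_n) R i (X.1 (pos1 i)) (Y.1 (pos1 i))) * P2 X.1 Y.1 *
    correlated_input X Y.
  by apply: funext2 => X Y; rewrite /two_input /P2 /correlated_input enumT; ring.
have first_block : foldl (traced_step U (pred2 (posA n) (posB n))) (two_input R R' om xi)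
    (map (@pos1 n) (enum 'I_n)) =
    fun X Y => P2 X.1 Y.1 * memsteps_blocks U Xi1 correlated_input X Y.
  rewrite inputE traced_evolution_product ?uniq_pos1 // => i _.
  - by rewrite /= (negbTE (pos1_neq_posA i)) (negbTE (pos1_neq_posB i)).
  - by move=> x y s s'; apply: eq_bigr => j _; rewrite !upd_other ?pos2_neq_pos1.
  - by move=> x y a b s s'; rewrite /correlated_input /= !upd_other // eq_sym
      ?pos1_neq_posA ?pos1_neq_posB.
rewrite enum_two_input foldl_cat first_block /= traced_step_keep ?inE ?eqxx //.
rewrite conjU_factor; last first.
  by move=> x y s s'; apply: eq_bigr => j _; rewrite !upd_other ?pos2_neq_posA.
set K1 := conjU U (posA n) _.
have -> : (fun X Y => P2 X.1 Y.1 * K1 X Y) = fun X Y =>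
    (\prod_(i <- enum 'I_n) R' i (X.1 (pos2 i)) (Y.1 (pos2 i))) *
    (fun _ _ => 1) X.1 Y.1 * K1 X Y.
  by apply: funext2 => X Y; rewrite mulr1.
rewrite foldl_cat (traced_evolution_product U _ _ _ R' _ (fun _ _ => 1)) ?uniq_pos2 //.
- rewrite /= traced_step_keep ?inE ?eqxx ?orbT //.
  by congr (conjU U _ _); apply: funext2 => X Y; rewrite mul1r.
- by move=> i _; rewrite /= (negbTE (pos2_neq_posA i)) (negbTE (pos2_neq_posB i)).
- move=> i _; apply: indep_at_conjU; first exact: pos2_neq_posA.
  apply: indep_at_memsteps_blocks => x y a b s s'.
  by rewrite /correlated_input /= !upd_other // eq_sym ?pos2_neq_posA ?pos2_neq_posB.
Qed.

Lemma block_conjU_posA (x y : ff) :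
  block (conjU U (posA n) (memsteps_blocks U Xi1 correlated_input)) x y =
  block (conjop U (tensop (om_block (x (posB n)) (y (posB n))) (mem_after U xi Xi1)))
    (x (posA n)) (y (posA n)).
Proof.
have BA : posB n != posA n by rewrite eq_sym posA_neq_posB.
apply: funext2 => e e'; rewrite /block conjUE conjop_pair.
apply: eq_bigr => s _; apply: eq_bigr => g _; apply: eq_bigr => s' _.
apply: eq_bigr => g' _; rewrite memsteps_blocksE.
have -> : block correlated_input (upd x (posA n) s) (upd y (posA n) s') =
          fun c c' => om_block (x (posB n)) (y (posB n)) s s' * xi c c'.
  by apply: funext2 => c c'; rewrite /block /correlated_input /= !upd_same !upd_other.
by rewrite mem_afterZ.
Qed.

Lemma out2_two_input I J :
  out2 (posA n) (posB n) (evolve U (two_input R R' om xi)) I J =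
  \sum_t \sum_t' chan U (mem_after U
      (block (conjop U (tensop (om_block t t') (mem_after U xi Xi1))) I.1 J.1) Xi2)
    (eunit t t') I.2 J.2.
Proof.
have BA : posB n != posA n by rewrite eq_sym posA_neq_posB.
rewrite out2E ?posA_neq_posB // evolve_foldl_conjU ptraces_foldl_conjU ?enum_uniq //.
rewrite traced_two_input sum_mem_conjU !ffunE (negbTE BA).
apply: eq_bigr => t _; apply: eq_bigr => t' _.
rewrite block_memsteps_blocks block_conjU_posA !upd_same.
by rewrite !(upd_other _ _ _ _ posA_neq_posB) !ffunE eqxx.
Qed.
End TwoInputs.

Theorem theorem1 (d k n : nat) (U : Op ('I_d * 'I_k)%type)
  (R R' : 'I_n -> Op 'I_d) (om : Op ('I_d * 'I_d)%type) (xi xi1 xi2 : Op 'I_k) :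
  unitary U ->
  memory_depth U n ->
  (forall i, density (R i)) -> (forall i, density (R' i)) ->
  density om -> density xi -> density xi1 -> density xi2 ->
  out2 (posA n) (posB n) (evolve U (two_input R R' om xi)) =
  tensmap (EXi U R xi1) (EXi U R' xi2) om.
Proof.
move=> _ [depthU _] densR densR' _ [_ trxi] densxi1 densxi2.
apply: funext2 => I J; rewrite out2_two_input /tensmap.
under eq_bigr => t _ do under eq_bigr => t' _ do
  rewrite (chan_after_reset U _ _ _ depthU densR' densxi2) /=.
under eq_bigr => t _ do under eq_bigr => t' _ do
  rewrite traceop_block_conjop (chan_after_reset U _ _ _ depthU densR densxi1).
rewrite [RHS]exchange_big; apply: eq_bigr => t _ /=.
under [RHS]eq_bigr => s _ do rewrite exchange_big.
rewrite [RHS]exchange_big; apply: eq_bigr => t' _.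
rewrite trxi mul1r chan_eunit_expansion mulr_suml; apply: eq_bigr => s _.
by rewrite mulr_suml; apply: eq_bigr => s' _; rewrite !EXiE.
Qed.
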